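(* Let $(\Sigma,\theta)$ be a topological space, let $G(X)=\{\star\}+\Sigma\times X$ on $\mathbf{Set}$, whose initial algebra is $\Sigma^*$ with $\delta(\star)=\varepsilon$ and $\delta(a,w)=aw$, and let $T$ be its lift to $\mathbf{Top}$ given by $T(X)=\{\star\}+\Sigma\times X$ with the coproduct and product topologies. Then the divisibility topology on $\Sigma^*$ associated to $G$ (and $T$) is the subword topology on $\Sigma^*$.
   Context: For an analytic functor $G$ with initial algebra $(\mu G,\delta)$, $\mathrm{supp}(y)$ for $y\in G(Y)$ is the image $f(X)$ of a weak normal form $f:(X,x)\to(Y,y)$ in the category of elements of $G$; for this $G$, $\mathrm{supp}(a,w)=\{w\}$ and $\mathrm{supp}(\star)=\emptyset$. The substructure ordering $\sqsubseteq$ on $\mu G$ is the reflexive–transitive closure of ''$a\in\mathrm{supp}(\delta^{-1}(b))$'' (here: the suffix ordering). The divisibility topology is the least fixed point of the map sending a topology $\tau$ on $\mu G$ to the topology generated by $\{\uparrow_\sqsubseteq\delta(V):V\text{ open in }T(\mu G,\tau)\}$. The subword topology on $\Sigma^*$ is generated by the sets $\Sigma^*U_1\Sigma^*\cdots\Sigma^*U_n\Sigma^*$ with $U_i\in\theta$. *)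

From Stdlib Require Import List Relations.
Import ListNotations.
Set Implicit Arguments.

Definition set (X : Type) := X -> Prop.

Definition is_topology (X : Type) (tau : set (set X)) : Prop :=
  tau (fun _ => True) /\
  (forall (I : Type) (F : I -> set X),
      (forall i, tau (F i)) -> tau (fun x => exists i, F i x)) /\
  (forall U V, tau U -> tau V -> tau (fun x => U x /\ V x)).

Definition generated_topology (X : Type) (B : set (set X)) : set (set X) :=
  fun U => forall tau, is_topology tau -> (forall V, B V -> tau V) -> tau U.

Definition product_topology (A B : Type) (tA : set (set A)) (tB : set (set B))
  : set (set (A * B)) :=
  fun W => forall p, W p -> exists U V, tA U /\ tB V /\ U (fst p) /\ V (snd p) /\
                            (forall a b, U a -> V b -> W (a, b)).

(* Coproduct topology on unit + Y, {star} carrying the unique (discrete) topology. *)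
Definition coproduct_unit_topology (Y : Type) (tY : set (set Y))
  : set (set (unit + Y)) :=
  fun W => tY (fun y => W (inr y)).

Definition T_topology (Sigma X : Type) (theta : set (set Sigma)) (tau : set (set X))
  : set (set (unit + Sigma * X)) :=
  coproduct_unit_topology (product_topology theta tau).

Definition delta (Sigma : Type) (t : unit + Sigma * list Sigma) : list Sigma :=
  match t with
  | inl _ => []
  | inr (a, w) => a :: w
  end.

(* "v in supp(delta^{-1}(u))": supp(a,w) = {w}, supp(star) = {}. *)
Definition supp_rel (Sigma : Type) (v u : list Sigma) : Prop :=
  exists t, delta t = u /\ match t with inl _ => False | inr (_, w) => w = v end.

Definition substructure (Sigma : Type) : relation (list Sigma) :=
  clos_refl_trans (list Sigma) (@supp_rel Sigma).

Definition upset (Sigma : Type) (A : set (list Sigma)) : set (list Sigma) :=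
  fun u => exists v, A v /\ substructure v u.

Definition delta_image (Sigma : Type) (V : set (unit + Sigma * list Sigma))
  : set (list Sigma) :=
  fun v => exists t, V t /\ delta t = v.

Definition div_step (Sigma : Type) (theta : set (set Sigma)) (tau : set (set (list Sigma)))
  : set (set (list Sigma)) :=
  generated_topology
    (fun U => exists V, T_topology theta tau V /\ U = upset (delta_image V)).

Definition is_least_fixed_point (X : Type) (Phi : set (set X) -> set (set X))
  (tau : set (set X)) : Prop :=
  (forall U, Phi tau U <-> tau U) /\
  (forall sigma, (forall U, Phi sigma U <-> sigma U) -> forall U, tau U -> sigma U).

Definition is_divisibility_topology (Sigma : Type) (theta : set (set Sigma))
  (tau : set (set (list Sigma))) : Prop :=
  is_least_fixed_point (div_step theta) tau.

Fixpoint subword_pattern (Sigma : Type) (Us : list (set Sigma)) (w : list Sigma) : Prop :=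
  match Us with
  | [] => True
  | U :: Us' => exists x a z, w = x ++ a :: z /\ U a /\ subword_pattern Us' z
  end.

Definition subword_topology (Sigma : Type) (theta : set (set Sigma))
  : set (set (list Sigma)) :=
  generated_topology
    (fun S => exists Us, (forall U, In U Us -> theta U) /\ S = subword_pattern Us).

(* The substructure order is the suffix order, so the generator [up(delta(V))] attached to
   a rectangle [U x W] inside [T(Sigma^* )] is the set [Sigma^* U W].  Iterating from a
   pattern [W = Sigma^* U_2 ... U_n Sigma^*] produces exactly the subword patterns, which
   therefore lie in every fixed point.  Conversely the subword patterns form a basis (two
   patterns matched by [w] contain a common refinement matched by [w]), and from a basic
   neighbourhood of [z] inside [W] and a neighbourhood [U] of [a] one gets a basic
   neighbourhood of [x a z] inside [Sigma^* U W]; so the subword topology is itself a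
   fixed point. *)

From Stdlib Require Import List Relations.
From Stdlib Require Import FunctionalExtensionality PropExtensionality.
Import ListNotations.
Set Implicit Arguments.

Definition subset (X : Type) (A B : set X) : Prop := forall x, A x -> B x.

Lemma set_ext (X : Type) (A B : set X) : (forall x, A x <-> B x) -> A = B.
Proof.
  intro H; apply functional_extensionality; intro x.
  apply propositional_extensionality; apply H.
Qed.

Lemma generated_topology_is_topology (X : Type) (B : set (set X)) :
  is_topology (generated_topology B).
Proof.
  split; [|split].
  - intros tau Htau _; apply Htau.
  - intros I F HF tau Htau HB; apply Htau; intro i; apply HF; auto.
  - intros U V HU HV tau Htau HB; apply Htau; [apply HU | apply HV]; auto.
Qed.

Lemma generated_topology_incl (X : Type) (B : set (set X)) (V : set X) :
  B V -> generated_topology B V.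
Proof. intros HV tau _ HB; auto. Qed.

Lemma substructure_suffix (Sigma : Type) (v u : list Sigma) :
  substructure v u <-> exists x, u = x ++ v.
Proof.
  split.
  - induction 1 as [v u [[[]|[a w]] [<- Hw]] | v | v w u _ [x1 Hx1] _ [x2 Hx2]].
    + contradiction.
    + subst; exists [a]; reflexivity.
    + exists []; reflexivity.
    + subst; exists (x2 ++ x1); apply app_assoc.
  - intros [x ->]; induction x as [|a x IH].
    + apply rt_refl.
    + apply rt_trans with (x ++ v); [exact IH|].
      apply rt_step; exists (inr (a, x ++ v)); auto.
Qed.

Lemma upset_delta_imageE (Sigma : Type) (V : set (unit + Sigma * list Sigma)) (u : list Sigma) :
  upset (delta_image V) u <-> exists x t, V t /\ u = x ++ delta t.
Proof.
  split.
  - intros [v [[t [Vt <-]] Hs]]; apply substructure_suffix in Hs as [x ->]; eauto.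
  - intros [x [t [Vt ->]]]; exists (delta t); split; [exists t; auto|].
    apply substructure_suffix; eauto.
Qed.

Lemma subword_pattern_app_l (Sigma : Type) (Us : list (set Sigma)) (y z : list Sigma) :
  subword_pattern Us z -> subword_pattern Us (y ++ z).
Proof.
  destruct Us as [|U Us]; simpl; auto.
  intros [x [a [z' [-> HUs]]]]; exists (y ++ x), a, z'.
  rewrite <- app_assoc; auto.
Qed.

Lemma subword_pattern_cons_inv (Sigma : Type) (U : set Sigma) Us (a : Sigma) w :
  subword_pattern (U :: Us) (a :: w) ->
  (U a /\ subword_pattern Us w) \/ subword_pattern (U :: Us) w.
Proof.
  intros [[|c x] [b [z [E [Hb Hz]]]]]; injection E; intros; subst.
  - left; auto.
  - right; exists x, b, z; auto.
Qed.

Lemma subword_pattern_cons_mono (Sigma : Type) (U U' : set Sigma) Us Us' :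
  subset U U' -> subset (subword_pattern Us) (subword_pattern Us') ->
  subset (subword_pattern (U :: Us)) (subword_pattern (U' :: Us')).
Proof. intros HU HUs v [x [b [z [-> [Hb Hz]]]]]; exists x, b, z; auto. Qed.

Lemma subword_pattern_cons_tail (Sigma : Type) (U : set Sigma) Us Us' :
  subset (subword_pattern Us) (subword_pattern Us') ->
  subset (subword_pattern (U :: Us)) (subword_pattern Us').
Proof.
  intros HUs v [x [b [z [-> [_ Hz]]]]].
  replace (x ++ b :: z) with ((x ++ [b]) ++ z) by (rewrite <- app_assoc; reflexivity).
  apply subword_pattern_app_l, HUs, Hz.
Qed.

Section SubwordBasis.

Variables (Sigma : Type) (theta : set (set Sigma)).
Hypothesis theta_inter : forall U V, theta U -> theta V -> theta (fun x => U x /\ V x).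

Lemma subword_pattern_refine (w : list Sigma) : forall Us1 Us2,
  Forall theta Us1 -> Forall theta Us2 ->
  subword_pattern Us1 w -> subword_pattern Us2 w ->
  exists Us, Forall theta Us /\ subword_pattern Us w /\
    subset (subword_pattern Us) (subword_pattern Us1) /\
    subset (subword_pattern Us) (subword_pattern Us2).
Proof.
  induction w as [|a w IH]; intros [|U1 Us1] Us2 O1 O2 P1 P2.
  - exists Us2; repeat split; auto; intros v Hv; simpl; auto.
  - destruct P1 as [[|] [? [? [E _]]]]; discriminate.
  - exists Us2; repeat split; auto; intros v Hv; simpl; auto.
  - destruct Us2 as [|U2 Us2].
    { exists (U1 :: Us1); repeat split; auto; intros v Hv; simpl; auto. }
    inversion O1 as [|? ? OU1 OUs1]; inversion O2 as [|? ? OU2 OUs2]; subst.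
    destruct (subword_pattern_cons_inv P1) as [[A1 Q1]|Q1];
      destruct (subword_pattern_cons_inv P2) as [[A2 Q2]|Q2].
    + destruct (IH _ _ OUs1 OUs2 Q1 Q2) as [Us [O [P [I1 I2]]]].
      exists ((fun x => U1 x /\ U2 x) :: Us); repeat split.
      * constructor; auto.
      * exists [], a, w; simpl; auto.
      * apply subword_pattern_cons_mono; auto; intros b []; auto.
      * apply subword_pattern_cons_mono; auto; intros b []; auto.
    + destruct (IH _ _ OUs1 O2 Q1 Q2) as [Us [O [P [I1 I2]]]].
      exists (U1 :: Us); repeat split.
      * constructor; auto.
      * exists [], a, w; simpl; auto.
      * apply subword_pattern_cons_mono; auto; intros b Hb; exact Hb.
      * apply subword_pattern_cons_tail, I2.
    + destruct (IH _ _ O1 OUs2 Q1 Q2) as [Us [O [P [I1 I2]]]].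
      exists (U2 :: Us); repeat split.
      * constructor; auto.
      * exists [], a, w; simpl; auto.
      * apply subword_pattern_cons_tail, I1.
      * apply subword_pattern_cons_mono; auto; intros b Hb; exact Hb.
    + destruct (IH _ _ O1 O2 Q1 Q2) as [Us [O [P I]]].
      exists Us; split; [|split]; [exact O | exact (subword_pattern_app_l Us [a] w P) | exact I].
Qed.

Definition subword_local (W : set (list Sigma)) : Prop :=
  forall w, W w -> exists Us, Forall theta Us /\ subword_pattern Us w /\
                              subset (subword_pattern Us) W.

Lemma subword_local_is_topology : is_topology subword_local.
Proof.
  split; [|split].
  - intros w _; exists []; repeat split; auto.
  - intros I F HF w [i Hi]; destruct (HF i w Hi) as [Us [O [P Q]]].
    exists Us; repeat split; auto; intros v Hv; exists i; auto.
  - intros U V HU HV w [Hu Hv].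
    destruct (HU w Hu) as [Us1 [O1 [P1 Q1]]], (HV w Hv) as [Us2 [O2 [P2 Q2]]].
    destruct (subword_pattern_refine w O1 O2 P1 P2) as [Us [O [P [I1 I2]]]].
    exists Us; repeat split; auto.
Qed.

Lemma subword_openE (W : set (list Sigma)) : subword_topology theta W <-> subword_local W.
Proof.
  split.
  - intro HW; apply HW; [apply subword_local_is_topology|].
    intros V [Us [O ->]] w Hw; exists Us; repeat split; auto.
    + apply Forall_forall, O.
    + intros v Hv; exact Hv.
  - intro HW.
    set (I := {Us | Forall theta Us /\ subset (subword_pattern Us) W}).
    assert (E : W = fun w => exists i : I, subword_pattern (proj1_sig i) w).
    { apply set_ext; intro w; split.
      - intro Hw; destruct (HW w Hw) as [Us [O [P Q]]].
        exists (exist _ Us (conj O Q)); exact P.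
      - intros [[Us [O Q]] P]; exact (Q w P). }
    rewrite E; apply generated_topology_is_topology.
    intros [Us [O Q]]; apply generated_topology_incl.
    exists Us; split; [apply Forall_forall, O | reflexivity].
Qed.

End SubwordBasis.

Definition cons_rectangle (Sigma : Type) (U : set Sigma) (W : set (list Sigma))
  : set (unit + Sigma * list Sigma) :=
  fun t => match t with inl _ => False | inr (a, w) => U a /\ W w end.

Section DivStep.

Variables (Sigma : Type) (theta : set (set Sigma)) (tau : set (set (list Sigma))).

Lemma T_topology_cons_rectangle (U : set Sigma) (W : set (list Sigma)) :
  theta U -> tau W -> T_topology theta tau (cons_rectangle U W).
Proof. intros HU HW [a w] [Ha Hw]; exists U, W; repeat split; auto. Qed.

Lemma subword_pattern_cons_upset (U : set Sigma) Us :
  subword_pattern (U :: Us) = upset (delta_image (cons_rectangle U (subword_pattern Us))).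
Proof.
  apply set_ext; intro u; rewrite upset_delta_imageE; split.
  - intros [x [a [z [-> Hz]]]]; exists x, (inr (a, z)); auto.
  - intros [x [[[]|[a z]] [Ht ->]]]; [contradiction|]; exists x, a, z; auto.
Qed.

Lemma div_step_full : div_step theta tau (fun _ => True).
Proof. apply generated_topology_is_topology. Qed.

Lemma div_step_subword_pattern_cons (U : set Sigma) Us :
  theta U -> tau (subword_pattern Us) -> div_step theta tau (subword_pattern (U :: Us)).
Proof.
  intros HU HUs; rewrite subword_pattern_cons_upset.
  apply generated_topology_incl; eexists; split; [|reflexivity].
  apply T_topology_cons_rectangle; auto.
Qed.

Lemma subword_pattern_prefixed :
  subset (div_step theta tau) tau ->
  forall Us, Forall theta Us -> tau (subword_pattern Us).
Proof.
  intros Hpre Us O; induction O as [|U Us HU _ IH]; apply Hpre.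
  - apply div_step_full.
  - apply div_step_subword_pattern_cons; auto.
Qed.

End DivStep.

Lemma div_step_subword_sub (Sigma : Type) (theta : set (set Sigma)) :
  (forall U V, theta U -> theta V -> theta (fun x => U x /\ V x)) ->
  subset (div_step theta (subword_topology theta)) (subword_topology theta).
Proof.
  intros theta_inter W HW; apply HW; [apply generated_topology_is_topology|].
  intros G [V [HV ->]]; apply subword_openE; auto.
  intros u Hu; apply upset_delta_imageE in Hu as [x [[[]|[a w]] [Vt ->]]].
  - exists []; repeat split; auto.
    intros v _; apply upset_delta_imageE; exists v, (inl tt); rewrite app_nil_r; auto.
  - destruct (HV (a, w) Vt) as [U0 [W0 [HU0 [HW0 [Ha [Hw Hrect]]]]]].
    apply subword_openE in HW0 as HW0; auto.
    destruct (HW0 w Hw) as [Us [O [P Q]]].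
    exists (U0 :: Us); repeat split; [constructor; auto | exists x, a, w; auto |].
    intros v [y [b [z [-> [Hb Hz]]]]].
    apply upset_delta_imageE; exists y, (inr (b, z)); split; [apply Hrect|]; auto.
Qed.

Lemma subword_sub_div_step (Sigma : Type) (theta : set (set Sigma)) tau :
  subset (div_step theta tau) tau -> subset (subword_topology theta) (div_step theta tau).
Proof.
  intros Hpre W HW; apply (HW (div_step theta tau)); [apply generated_topology_is_topology|].
  intros V [[|U Us] [O ->]].
  - apply div_step_full.
  - apply div_step_subword_pattern_cons; [apply O; left; reflexivity|].
    apply (subword_pattern_prefixed Hpre).
    apply Forall_forall; intros U' HU'; apply O; right; exact HU'.
Qed.

Theorem mainTheorem16 (Sigma : Type) (theta : set (set Sigma)) :
  is_topology theta ->
  is_divisibility_topology theta (subword_topology theta).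
Proof.
  intros [_ [_ theta_inter]].
  pose proof (div_step_subword_sub theta_inter) as Hpre.
  split.
  - intro U; split; [apply Hpre | apply subword_sub_div_step, Hpre].
  - intros sigma Hfix U HU; apply (proj1 (Hfix U)).
    refine (subword_sub_div_step _ HU); intros V; apply (proj1 (Hfix V)).
Qed.
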